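(* Let $\mathbb{M}^2$ be a strictly convex normed plane, let $p,q\in\mathbb{M}^2$ be distinct points, and let $y$ be a point of the bisector $\mathrm{bis}(p,q)=\{z:\|z-p\|=\|z-q\|\}$. Then for every $\epsilon>0$, $\|y+\epsilon(y-p)-q\|<\|y+\epsilon(y-p)-p\|$.
   Context: $\mathbb{M}^2$ is $\mathbb{R}^2$ with a norm $\|\cdot\|$; it is strictly convex if its unit sphere contains no nondegenerate line segment. The paper phrases the hypothesis as $y\in Bi(p,q)$, where $Bi(p,q)\subseteq\mathrm{bis}(p,q)$ is a simple curve that can be chosen to pass through any given point of $\mathrm{bis}(p,q)$; hence the condition is that $y$ is a point of the bisector. *)

From HB Require Import structures.
From mathcomp Require Import all_boot all_order all_algebra.
From mathcomp Require Import reals.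
Set Implicit Arguments. Unset Strict Implicit. Unset Printing Implicit Defensive.
Import Order.TTheory GRing.Theory Num.Theory.
Local Open Scope ring_scope.

Definition is_norm (R : realType) (N : 'rV[R]_2 -> R) : Prop :=
  [/\ (forall x, 0 <= N x),
      (forall x, N x = 0 -> x = 0),
      (forall (a : R) x, N (a *: x) = `|a| * N x) &
      (forall x y, N (x + y) <= N x + N y)].

Definition strictly_convex (R : realType) (N : 'rV[R]_2 -> R) : Prop :=
  ~ (exists x y : 'rV[R]_2, x <> y /\
       forall t : R, 0 <= t <= 1 -> N ((1 - t) *: x + t *: y) = 1).

Definition bis (R : realType) (N : 'rV[R]_2 -> R) (p q : 'rV[R]_2) : 'rV[R]_2 -> Prop :=
  fun z => N (z - p) = N (z - q).

(** Write a := y - p and b := y - q, so that N a = N b =: r > 0 and a <> b.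
    The triangle inequality gives N (b + eps a) <= (1 + eps) r.  Equality
    would put the point (b + eps a) / ((1 + eps) r), which lies strictly
    inside the chord joining the unit vectors b / r and a / r, on the unit
    sphere; by convexity of the norm the whole chord would then lie on the
    sphere, contradicting strict convexity. *)
From HB Require Import structures.
From mathcomp Require Import all_boot all_order all_algebra.
From mathcomp Require Import reals.
From mathcomp Require Import ring lra.
Import Order.TTheory GRing.Theory Num.Theory.
Local Open Scope ring_scope.

Section NormedPlane.
Variables (R : realType) (N : 'rV[R]_2 -> R).
Hypothesis hN : is_norm N.

Lemma norm_scale_ge0 (a : R) x : 0 <= a -> N (a *: x) = a * N x.
Proof. by case: hN => _ _ hs _ a0; rewrite hs ger0_norm. Qed.

Lemma norm_conic_le x y (c d : R) :
  0 <= c -> 0 <= d -> N (c *: x + d *: y) <= c * N x + d * N y.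
Proof.
case: hN => _ _ _ ht c0 d0.
by apply: le_trans (ht _ _) _; rewrite !norm_scale_ge0.
Qed.

Lemma unit_chord_le1 u v t : N u = 1 -> N v = 1 -> 0 <= t <= 1 ->
  N ((1 - t) *: v + t *: u) <= 1.
Proof.
move=> Nu Nv /andP[t0 t1].
by apply: le_trans (@norm_conic_le v u (1 - t) t _ _) _; rewrite ?Nu ?Nv; lra.
Qed.

(* For t <= t0, the chord point at t0 is a convex combination of the
   chord point at t and of u, with weight l on the former. *)
Lemma unit_chord_ge1_before u v t t0 : N u = 1 -> t <= t0 -> t0 < 1 ->
  N ((1 - t0) *: v + t0 *: u) = 1 -> 1 <= N ((1 - t) *: v + t *: u).
Proof.
move=> Nu tt0 t01 Nt0.
pose l := (1 - t0) / (1 - t).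
have l_t : l * (1 - t) = 1 - t0 by rewrite /l mulfVK //; lra.
have l_gt0 : 0 < l by rewrite /l divr_gt0 //; lra.
have l_le1 : l <= 1 by rewrite /l ler_pdivrMr; lra.
have decomp : (1 - t0) *: v + t0 *: u
    = l *: ((1 - t) *: v + t *: u) + (1 - l) *: u.
  rewrite scalerDr !scalerA -addrA -scalerDl l_t.
  by congr (_ + _ *: _); lra.
have l_ge0 : 0 <= 1 - l by lra.
have := norm_conic_le ((1 - t) *: v + t *: u) u l (1 - l) (ltW l_gt0) l_ge0.
rewrite -decomp Nt0 Nu => le1.
by rewrite -(ler_pM2l l_gt0) mulr1; lra.
Qed.

Lemma unit_chord_eq1 u v t0 t : N u = 1 -> N v = 1 -> 0 < t0 < 1 ->
  N ((1 - t0) *: v + t0 *: u) = 1 -> 0 <= t <= 1 ->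
  N ((1 - t) *: v + t *: u) = 1.
Proof.
move=> Nu Nv /andP[t00 t01] Nt0 t01'.
apply/eqP; rewrite eq_le unit_chord_le1 //=.
have [tt0 | t0t] := leP t t0; first exact: unit_chord_ge1_before Nt0.
have chord_swap s : (1 - s) *: v + s *: u = (1 - (1 - s)) *: u + (1 - s) *: v.
  by rewrite addrC; congr (_ *: _ + _); ring.
rewrite chord_swap; apply: (unit_chord_ge1_before v u (1 - t) (1 - t0) Nv).
- lra.
- lra.
- by rewrite -chord_swap.
Qed.

Lemma strictly_convex_unit_chord_lt1 u v t : strictly_convex N ->
  N u = 1 -> N v = 1 -> u <> v -> 0 < t < 1 ->
  N ((1 - t) *: v + t *: u) < 1.
Proof.
move=> hsc Nu Nv uv /andP[t0 t1].
have t01 : 0 <= t <= 1 by rewrite (ltW t0) (ltW t1).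
rewrite lt_neqAle unit_chord_le1 // andbT.
apply/eqP => Nt; apply: hsc; exists v, u; split; first by move/esym.
by move=> s; apply: (unit_chord_eq1 u v t s) => //; rewrite t0 t1.
Qed.

Lemma strictly_convex_normD_lt a b eps : strictly_convex N ->
  N a = N b -> a <> b -> 0 < eps -> N (b + eps *: a) < (1 + eps) * N a.
Proof.
move=> hsc Nab ab eps0.
have r0 : 0 < N a.
  case: hN => N0 Nz _ _; rewrite lt_def N0 andbT; apply/eqP => a0.
  by apply: ab; rewrite (Nz _ a0) (Nz b) // -Nab.
set r := N a in Nab r0 *.
pose t := eps / (1 + eps).
have t01 : 0 < t < 1 by rewrite divr_gt0 ?ltr_pdivrMr; lra.
have chord : b + eps *: a
    = ((1 + eps) * r) *: ((1 - t) *: (r^-1 *: b) + t *: (r^-1 *: a)).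
  rewrite scalerDr !scalerA -{1}[b]scale1r /t; congr (_ *: _ + _ *: _);
  by field; apply/andP; split; apply/negP => /eqP; lra.
have unit c : N c = r -> N (r^-1 *: c) = 1.
  by move=> Nc; rewrite norm_scale_ge0 ?invr_ge0 ?ltW // Nc mulVf ?gt_eqF.
rewrite chord norm_scale_ge0; last by apply: mulr_ge0; lra.
rewrite -[X in _ < X]mulr1 ltr_pM2l; last by apply: mulr_gt0; lra.
apply: strictly_convex_unit_chord_lt1; rewrite ?unit //.
by move/(scalerI (invr_neq0 (lt0r_neq0 r0))).
Qed.

End NormedPlane.

Theorem lemma6p1 (R : realType) (N : 'rV[R]_2 -> R)
  (hN : is_norm N) (hsc : strictly_convex N)
  (p q y : 'rV[R]_2) (hpq : p <> q) (hy : bis N p q y)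
  (eps : R) (heps : 0 < eps) :
  N (y + eps *: (y - p) - q) < N (y + eps *: (y - p) - p).
Proof.
have -> : y + eps *: (y - p) - q = (y - q) + eps *: (y - p) by rewrite addrAC.
have -> : y + eps *: (y - p) - p = (1 + eps) *: (y - p).
  by rewrite scalerDl scale1r addrAC.
rewrite norm_scale_ge0 //; last lra.
apply: strictly_convex_normD_lt => // /subrI; exact: hpq.
Qed.
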